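(* For every $x\ge1$, $$x^{-1/x}\,\Gamma\!\Big(\frac1x\Big)\ \le\ \Gamma\!\Big(x,\frac1x\Big)\ \le\ x^{x}\,\Gamma(x),$$ and for every $0<x\le1$ both inequalities are reversed: $$x^{-1/x}\,\Gamma\!\Big(\frac1x\Big)\ \ge\ \Gamma\!\Big(x,\frac1x\Big)\ \ge\ x^{x}\,\Gamma(x).$$
   Context: For $x>0,y>0$ the Bigamma function is the (convergent) improper integral $\Gamma(x,y):=\int_0^1(-\ln t)^{x-1}\big(-\ln(1-t)\big)^{y-1}\,dt$. $\Gamma(x)$ (one argument) denotes Euler's gamma function. *)

(* integrals are Lebesgue integrals of nonnegative
   functions, valued in the extended reals \bar R; for nonnegative integrands
   these coincide with the (convergent) improper Riemann integrals. *)
From HB Require Import structures.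
From mathcomp Require Import all_boot all_order all_algebra.
From mathcomp Require Import all_classical all_reals all_analysis.
Set Implicit Arguments. Unset Strict Implicit. Unset Printing Implicit Defensive.
Import Order.TTheory GRing.Theory Num.Theory.
Local Open Scope classical_set_scope.
Local Open Scope ring_scope.

Definition EulerGamma (R : realType) (x : R) : \bar R :=
  (\int[@lebesgue_measure R]_(t in `]0%R, +oo[) (t `^ (x - 1) * expR (- t))%:E)%E.

Definition Bigamma (R : realType) (x y : R) : \bar R :=
  (\int[@lebesgue_measure R]_(t in `]0%R, 1%R[)
      ((- ln t) `^ (x - 1) * (- ln (1 - t)) `^ (y - 1))%:E)%E.

From HB Require Import structures.
From mathcomp Require Import all_boot all_order all_algebra.
From mathcomp Require Import all_classical all_reals all_analysis.
Import Order.TTheory GRing.Theory Num.Theory.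
From mathcomp Require Import measurable_realfun lra ring.
Import numFieldNormedType.Exports.
Local Open Scope classical_set_scope.
Local Open Scope ring_scope.

(* Substituting [t = expR (- v / q)] gives
   [\int_0^1 t^(q-1) (- ln t)^(p-1) dt = q^(-p) Gamma(p)].
   Since [t <= - ln (1 - t)] on [`]0, 1[], replacing the factor
   [(- ln (1 - t))^(y-1)] of the Bigamma integrand by [t^(y-1)] bounds
   [Bigamma x y] by [y^(-x) Gamma(x)]: from above when [y <= 1], from below when
   [y >= 1].  For [y = 1/x] this gives one inequality, since
   [(1/x)^(-x) = x^x]; the symmetry [Bigamma x y = Bigamma y x]
   (from [t |-> 1 - t]) turns the same bound into the other one. *)

Section elementary.
Variable R : realType.

Lemma le0_ger_powR (r : R) : r <= 0 ->
  {in Num.pos &, {homo (@powR R) ^~ r : x y /~ x <= y}}.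
Proof.
move=> r0 x y x0 y0 yx; rewrite -(opprK r) !(powRN _ (- r)).
rewrite lef_pV2 ?posrE ?powR_gt0 //.
by apply: ge0_ler_powR; rewrite ?oppr_ge0 // nnegrE ltW.
Qed.

Lemma onem_le_lnN (s : R) : 0 < s -> 1 - s <= - ln s.
Proof. by move=> s0; have := @le_ln1Dx R (s - 1); rewrite addrCA subrr addr0; lra. Qed.

Lemma invr_powRN (x : R) : 0 <= x -> x^-1 `^ (- x) = x `^ x.
Proof. by move=> x0; rewrite -powR_inv1 // -powRrM mulN1r opprK. Qed.

End elementary.

Section reflection.
Variable R : realType.
Local Notation mu := (@lebesgue_measure R).

Lemma lebesgue_measure_subr (c : R) (A : set R) : measurable A ->
  pushforward mu ((fun t => c - t) : R -> measurableTypeR R) A = mu A.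
Proof.
move=> mA; have mc : measurable_fun [set: R] (fun t => c - t).
  by apply: measurable_funB => //; exact: measurable_cst.
apply/esym/lebesgue_measure_unique => //= _ [[a b]] _ <-.
rewrite /pushforward.
have -> : (fun t => c - t) @^-1` `]a, b] = `[c - b, c - a[%classic.
  by apply/seteqP; split => t /=; rewrite !in_itv/= => /andP[? ?];
    apply/andP; split; lra.
rewrite !lebesgue_measure_itv/= !lte_fin.
have -> : (c - b < c - a) = (a < b) by apply/idP/idP; lra.
by case: ifP => // _; congr EFin; lra.
Qed.

Lemma ge0_integral01_onem (f : R -> \bar R) :
  measurable_fun [set: R] f -> (forall t, 0 <= f t)%E ->
  (\int[mu]_(t in `]0%R, 1%R[) f t = \int[mu]_(t in `]0%R, 1%R[) f (1 - t)%R)%E.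
Proof.
move=> mf f0.
have onem01 : (fun t => 1 - t) @^-1` `]0, 1[ = `]0, 1[%classic :> set R.
  by apply/seteqP; split => t /=; rewrite !in_itv/= => /andP[? ?];
    apply/andP; split; lra.
have monem : measurable_fun [set: R] (fun t => 1 - t).
  by apply: measurable_funB => //; exact: measurable_cst.
rewrite -[in RHS]onem01 -(@ge0_integral_pushforward _ _ (measurableTypeR R) (measurableTypeR R) R
  ((fun t => 1 - t) : R -> measurableTypeR R) monem mu) //.
- by apply: eq_measure_integral => A mA _ /=; rewrite lebesgue_measure_subr.
- exact: measurable_funTS.
Qed.

Lemma measurable_fun_onem (g : R -> R) : measurable_fun [set: R] g ->
  measurable_fun [set: R] (fun t => g (1 - t)).
Proof.
move=> mg; apply: (@measurableT_comp _ _ _ _ _ _ g _ (fun t : R => 1 - t)) => //.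
by apply: measurable_funB => //; exact: measurable_cst.
Qed.

End reflection.

Section powR_lnN_integral.
Variable R : realType.
Local Notation mu := (@lebesgue_measure R).

Lemma bigcup_itvcc_invn_n :
  \bigcup_n `[n.+1%:R^-1, n.+1%:R]%classic = `]0, +oo[%classic :> set R.
Proof.
apply/seteqP; split => x /=.
  move=> [n _]; rewrite /= !in_itv/= andbT => /andP[+ _].
  by apply: lt_le_trans; rewrite invr_gt0.
rewrite in_itv/= andbT => x0; have xV0 : 0 < x^-1 by rewrite invr_gt0.
have := truncnS_gt (x + x^-1).
exists (Num.truncn (x + x^-1)) => //=; rewrite in_itv/=; apply/andP; split.
  by rewrite -[leRHS]invrK lef_pV2 ?posrE //; lra.
lra.
Qed.

Lemma bigcup_itvcc_expR (c : R) : 0 < c ->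
  \bigcup_n `[expR (- c * n.+1%:R), expR (- c * n.+1%:R^-1)]%classic =
  `]0, 1[%classic.
Proof.
move=> c0; have expR_homo x y : y <= x -> expR (- c * x) <= expR (- c * y).
  by move=> yx; rewrite ler_expR !mulNr lerN2 ler_pM2l.
apply/seteqP; split => t /=.
  move=> [n _]; rewrite /= !in_itv/= => /andP[h1 h2]; apply/andP; split.
    exact: lt_le_trans (expR_gt0 _) h1.
  by apply: le_lt_trans h2 _; rewrite expR_lt1 mulNr oppr_lt0 mulr_gt0 ?invr_gt0.
rewrite in_itv/= => /andP[t0 t1].
have : `]0, +oo[%classic (- ln t / c).
  by rewrite /= in_itv/= andbT divr_gt0 // oppr_gt0 ln_lt0 // t0 t1.
rewrite -bigcup_itvcc_invn_n => -[n _]; rewrite /= in_itv/= => /andP[h1 h2].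
exists n => //=; rewrite in_itv/= -(lnK (t0 : t \in Num.pos)).
have -> : ln t = - c * (- ln t / c) by field; rewrite gt_eqF.
by rewrite !expR_homo.
Qed.

Lemma continuous_powR (r a : R) : 0 < a -> {for a, continuous (@powR R ^~ r)}.
Proof.
move=> a0; apply/differentiable_continuous/derivable1_diffP.
by apply: derivable_powR; rewrite in_itv/= a0.
Qed.

Lemma continuous_powR_lnN (p q t : R) : 0 < t < 1 ->
  {for t, continuous (fun t => t `^ (q - 1) * (- ln t) `^ (p - 1))}.
Proof.
move=> /andP[t0 t1]; apply: continuousM; first exact: continuous_powR.
apply: (@continuous_comp _ _ _ (fun t => - ln t) (@powR R ^~ (p - 1))).
  by apply: continuousN; exact: continuous_ln.
by apply: continuous_powR; rewrite oppr_gt0 ln_lt0 // t0 t1.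
Qed.

Lemma measurable_lnN_powR (a : R) : measurable_fun [set: R] (fun t => (- ln t) `^ a).
Proof.
apply: (measurableT_comp (measurable_powR _)).
by apply: measurable_funN; exact: measurable_ln.
Qed.

Lemma measurable_powR_lnN (p q : R) :
  measurable_fun [set: R] (fun t => t `^ (q - 1) * (- ln t) `^ (p - 1)).
Proof. by apply: measurable_funM; [exact: measurable_powR | exact: measurable_lnN_powR]. Qed.

Lemma measurable_EulerGamma_integrand (p : R) :
  measurable_fun [set: R] (fun v => v `^ (p - 1) * expR (- v)).
Proof.
apply: measurable_funM; first exact: measurable_powR.
by apply: measurableT_comp => //; exact: measurable_expR.
Qed.

Lemma expR_substitution_integrand (p q v : R) : 0 < q -> 0 < v ->
  expR (- q^-1 * v) `^ (q - 1) * (- ln (expR (- q^-1 * v))) `^ (p - 1) *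
    - (- q^-1 * expR (- q^-1 * v)) =
  q `^ (- p) * (v `^ (p - 1) * expR (- v)).
Proof.
move=> q0 v0; have qv0 : 0 < q^-1 * v by rewrite mulr_gt0 ?invr_gt0.
have -> : - (- q^-1 * expR (- q^-1 * v)) = expR (- ln q - q^-1 * v).
  by rewrite expRD -lnV ?posrE // lnK ?posrE ?invr_gt0 // mulNr opprK mulNr.
rewrite expRK mulNr opprK /powR !gt_eqF ?expR_gt0 // expRK.
rewrite lnM ?posrE ?invr_gt0 // lnV ?posrE // -!expRD.
by congr expR; field; rewrite gt_eqF.
Qed.

Lemma integral_itvcc_expR_substitution (p q a b : R) : 0 < q -> 0 < a -> a <= b ->
  (\int[mu]_(t in `[expR (- q^-1 * b), expR (- q^-1 * a)])
     (t `^ (q - 1) * (- ln t) `^ (p - 1))%:E =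
  \int[mu]_(v in `[a, b]) (q `^ (- p) * (v `^ (p - 1) * expR (- v)))%:E)%E.
Proof.
move=> q0 a0 ab; set c := q^-1; have c0 : 0 < c by rewrite invr_gt0.
set F := fun v => expR (- c * v).
have F' : F^`()%classic = (fun v => - c * F v).
  apply/funext => v; rewrite (_ : F = expR \o ( *%R (- c))) // derive1_comp //.
  rewrite derive1Ml // derive1_id mulr1 derive1E.
  by have /funeqP -> := @derive_expR R; rewrite mulrC.
have cF : continuous F.
  move=> v; apply: continuous_comp; last exact: continuous_expR.
  by apply: continuousM; [exact: cst_continuous | exact: cvg_id].
have cF' : continuous (fun v => - c * F v).
  move=> v; apply: (@continuousM _ R^o (fun=> - c) F); [exact: cst_continuous | exact: cF].
rewrite (@integration_by_substitution_decreasing R F) //.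
- apply: eq_integral => v; rewrite inE/= in_itv/= => /andP[av _].
  have v0 : 0 < v by exact: lt_le_trans av.
  by rewrite F' !fctE /F; congr EFin; exact: expR_substitution_integrand.
- by move=> x y _ _ xy; rewrite /F ltr_expR !mulNr ltrN2 ltr_pM2l.
- by rewrite F' => x _; exact: cF'.
- by rewrite F'; apply: cvgP; apply: cvg_at_right_filter; exact: cF'.
- by rewrite F'; apply: cvgP; apply: cvg_at_left_filter; exact: cF'.
- split; last 2 first.
  + by apply: cvg_at_right_filter; exact: cF.
  + by apply: cvg_at_left_filter; exact: cF.
  move=> v _; apply/derivable1_diffP.
  apply: (@differentiable_comp _ _ _ _ ( *%R (- c)) expR); first exact/derivable1_diffP.
  by apply/derivable1_diffP; exact: derivable_expR.
- apply: continuous_in_subspaceT => t; rewrite inE/= in_itv/= => /andP[t0 t1].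
  apply: continuous_powR_lnN; apply/andP; split; first exact: lt_le_trans (expR_gt0 _) t0.
  by apply: le_lt_trans t1 _; rewrite expR_lt1 mulNr oppr_lt0 mulr_gt0.
Qed.

(* Integration by substitution is only available on compact intervals: exhaust
   [`]0, 1[] and [`]0, +oo[] by matching compact intervals and pass to the limit
   by monotone convergence. *)
Lemma integral01_powR_lnN (p q : R) : 0 < q ->
  (\int[mu]_(t in `]0%R, 1%R[) (t `^ (q - 1) * (- ln t) `^ (p - 1))%:E =
  (q `^ (- p))%:E * EulerGamma p)%E.
Proof.
move=> q0; have qV0 : 0 < q^-1 by rewrite invr_gt0.
have invn_le m n : (m <= n)%N -> n.+1%:R^-1 <= m.+1%:R^-1 :> R.
  by move=> mn; rewrite lef_pV2 ?posrE ?ler_nat.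
have natn_le m n : (m <= n)%N -> m.+1%:R <= n.+1%:R :> R.
  by move=> mn; rewrite ler_nat.
have expR_le x y : y <= x -> expR (- q^-1 * x) <= expR (- q^-1 * y).
  by move=> yx; rewrite ler_expR !mulNr lerN2 ler_pM2l.
pose A n := `[n.+1%:R^-1, n.+1%:R]%classic : set R.
pose B n := `[expR (- q^-1 * n.+1%:R), expR (- q^-1 * n.+1%:R^-1)]%classic.
have ndA : {homo A : m n / (m <= n)%N >-> (m <= n)%O}.
  by move=> m n mn; rewrite subsetEset; apply: subset_itv; rewrite bnd_simp; auto.
have ndB : {homo B : m n / (m <= n)%N >-> (m <= n)%O}.
  by move=> m n mn; rewrite subsetEset; apply: subset_itv; rewrite bnd_simp; auto.
have mB : measurable_fun [set: R] (fun t => (t `^ (q - 1) * (- ln t) `^ (p - 1))%:E).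
  by apply/measurable_EFinP; exact: measurable_powR_lnN.
have mA : measurable_fun [set: R]
    (fun v => (q `^ (- p) * (v `^ (p - 1) * expR (- v)))%:E).
  apply/measurable_EFinP; apply: measurable_funM; first exact: measurable_cst.
  exact: measurable_EulerGamma_integrand.
have cvgB := ge0_nondecreasing_set_cvg_integral (mu := mu) ndB (fun=> measurable_itv _)
  (fun=> measurable_funTS mB)
  (fun _ t _ => ltac:(by rewrite lee_fin mulr_ge0 ?powR_ge0)).
have cvgA := ge0_nondecreasing_set_cvg_integral (mu := mu) ndA (fun=> measurable_itv _)
  (fun=> measurable_funTS mA)
  (fun _ v _ => ltac:(by rewrite lee_fin !mulr_ge0 ?powR_ge0 ?expR_ge0)).
rewrite bigcup_itvcc_expR // in cvgB; rewrite bigcup_itvcc_invn_n in cvgA.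
have eqAB : (fun n => \int[mu]_(t in B n) (t `^ (q - 1) * (- ln t) `^ (p - 1))%:E)%E =
    (fun n => \int[mu]_(v in A n) (q `^ (- p) * (v `^ (p - 1) * expR (- v)))%:E)%E.
  apply/funext => n; apply: integral_itvcc_expR_substitution; rewrite ?invr_gt0 //.
  by rewrite (@le_trans _ _ 1) ?invf_le1 ?ler1n.
rewrite eqAB in cvgB; rewrite (cvg_unique (@ereal_hausdorff R) cvgB cvgA) /EulerGamma.
under eq_integral do rewrite EFinM.
rewrite ge0_integralZl_EFin ?powR_ge0 //.
- by move=> v _; rewrite lee_fin mulr_ge0 ?powR_ge0 ?expR_ge0.
- apply: measurable_funTS; apply/measurable_EFinP.
  exact: measurable_EulerGamma_integrand.
Qed.

End powR_lnN_integral.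

Section Bigamma.
Variable R : realType.

Lemma measurable_Bigamma_integrand (x y : R) :
  measurable_fun [set: R] (fun t => (- ln t) `^ (x - 1) * (- ln (1 - t)) `^ (y - 1)).
Proof.
apply: measurable_funM; first exact: measurable_lnN_powR.
exact: measurable_fun_onem (measurable_lnN_powR _ _).
Qed.

Lemma BigammaC (x y : R) : Bigamma x y = Bigamma y x.
Proof.
rewrite /Bigamma ge0_integral01_onem.
- by apply: eq_integral => t _; rewrite subKr mulrC.
- by apply/measurable_EFinP; exact: measurable_Bigamma_integrand.
- by move=> t; rewrite lee_fin mulr_ge0 ?powR_ge0.
Qed.

Lemma Bigamma_le_EulerGamma (x y : R) : 0 < y -> y <= 1 ->
  (Bigamma x y <= (y `^ (- x))%:E * EulerGamma x)%E.
Proof.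
move=> y0 y1; rewrite -integral01_powR_lnN //; apply: ge0_le_integral => //.
- by move=> t _; rewrite lee_fin mulr_ge0 ?powR_ge0.
- by apply: measurable_funTS; apply/measurable_EFinP; exact: measurable_Bigamma_integrand.
- by apply: measurable_funTS; apply/measurable_EFinP; exact: measurable_powR_lnN.
move=> t; rewrite /= in_itv/= => /andP[t0 t1]; rewrite lee_fin mulrC.
apply: ler_wpM2r; first exact: powR_ge0.
have lnN_gt0 : 0 < - ln (1 - t).
  by rewrite oppr_gt0 ln_lt0 //; apply/andP; split; lra.
have := @onem_le_lnN R (1 - t); rewrite subKr => /(_ ltac:(lra)).
by apply: le0_ger_powR; rewrite ?posrE ?subr_le0.
Qed.

Lemma EulerGamma_le_Bigamma (x y : R) : 1 <= y ->
  ((y `^ (- x))%:E * EulerGamma x <= Bigamma x y)%E.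
Proof.
move=> y1; rewrite -integral01_powR_lnN; last exact: lt_le_trans y1.
apply: ge0_le_integral => //.
- by move=> t _; rewrite lee_fin mulr_ge0 ?powR_ge0.
- by apply: measurable_funTS; apply/measurable_EFinP; exact: measurable_powR_lnN.
- by apply: measurable_funTS; apply/measurable_EFinP; exact: measurable_Bigamma_integrand.
move=> t; rewrite /= in_itv/= => /andP[t0 t1]; rewrite lee_fin mulrC.
apply: ler_wpM2l; first exact: powR_ge0.
have := @onem_le_lnN R (1 - t); rewrite subKr => /(_ ltac:(lra)) tle.
by apply: ge0_ler_powR; rewrite ?nnegrE ?subr_ge0 // ltW // (lt_le_trans t0).
Qed.

End Bigamma.

Theorem mainTheorem8 (R : realType) :
  (forall x : R, 1 <= x ->
     ((x `^ (- x^-1))%:E * EulerGamma x^-1 <= Bigamma x x^-1)%E /\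
     (Bigamma x x^-1 <= (x `^ x)%:E * EulerGamma x)%E) /\
  (forall x : R, 0 < x -> x <= 1 ->
     ((x `^ (- x^-1))%:E * EulerGamma x^-1 >= Bigamma x x^-1)%E /\
     (Bigamma x x^-1 >= (x `^ x)%:E * EulerGamma x)%E).
Proof.
split=> [x x1 | x x0 x1].
  have x0 : 0 < x := lt_le_trans ltr01 x1.
  rewrite -(@invr_powRN R x (ltW x0)); split.
    by rewrite BigammaC; exact: EulerGamma_le_Bigamma.
  by apply: Bigamma_le_EulerGamma; rewrite ?invr_gt0 ?invf_le1.
rewrite -(@invr_powRN R x (ltW x0)); split.
  by rewrite BigammaC; apply: Bigamma_le_EulerGamma.
by apply: EulerGamma_le_Bigamma; rewrite invf_ge1.
Qed.
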